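(* Let $\Gamma$ be a strongly connected digraph on $[n]$, let $S=S(\Gamma)$ be its total sandpile group, and let $S_i=S_i(\Gamma)$ for $i\in[n]$ be its sandpile groups at the vertices. Then: (1) for every $i$ there is a (canonical) surjection $S_i\to S$; (2) $|S|=\gcd\{|S_i|: i\in[n]\}$; (3) if $G$ is a finite abelian group such that for every $i\in[n]$ there is a surjection $S_i\to G$, then there is a surjection $S\to G$.
   Context: Digraphs may have multiple edges (and loops). $\deg(i,j)$ is the number of edges from $i$ to $j$, and $\mathrm{outdeg}(i)$ is the number of edges leaving $i$. A digraph is strongly connected if there is a directed path from every vertex to every other vertex. The Laplacian $L$ is the $n\times n$ integer matrix with $L_{ij}=-\deg(j,i)$ for $i\ne j$ and $L_{jj}=\mathrm{outdeg}(j)-\deg(j,j)$, so its columns sum to $0$. $L_i$ is the $(n-1)\times(n-1)$ matrix obtained from $L$ by deleting row $i$ and column $i$. The sandpile group at vertex $i$ is $S_i(\Gamma)=\mathbb{Z}^{n-1}/L_i\mathbb{Z}^{n-1}$; it is finite when $\Gamma$ is strongly connected. The total sandpile group is $S(\Gamma)=\mathbb{Z}^n_0/L\mathbb{Z}^n$, where $\mathbb{Z}^n_0$ is the subgroup of $\mathbb{Z}^n$ of vectors with entry sum $0$. *)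

From HB Require Import structures.
From mathcomp Require Import all_boot all_order all_algebra.
Set Implicit Arguments. Unset Strict Implicit. Unset Printing Implicit Defensive.
Import GRing.Theory.
Local Open Scope ring_scope.

(* A digraph (with multiple edges and loops) on the vertex set 'I_n is given by
   its multiplicity function: deg i j = number of edges from i to j. *)
Definition outdeg n (deg : 'I_n -> 'I_n -> nat) (j : 'I_n) : nat :=
  (\sum_(k < n) deg j k)%N.

Definition strongly_connected n (deg : 'I_n -> 'I_n -> nat) : Prop :=
  forall i j : 'I_n, connect [rel a b | (0 < deg a b)%N] i j.

Definition laplacian n (deg : 'I_n -> 'I_n -> nat) : 'M[int]_n :=
  \matrix_(i, j) (if i == j then (outdeg deg j)%:Z - (deg j j)%:Z
                  else - (deg j i)%:Z).

Definition reduced_laplacian n (deg : 'I_n -> 'I_n -> nat) (i : 'I_n)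
  : 'M[int]_n.-1 :=
  \matrix_(a, b) laplacian deg (lift i a) (lift i b).

Definition colspan m k (M : 'M[int]_(m, k)) (y : 'cV[int]_m) : Prop :=
  exists x : 'cV[int]_k, y = M *m x.
Definition sum_zero m (y : 'cV[int]_m) : Prop := \sum_(k < m) y k 0 = 0.
Definition allZ m (y : 'cV[int]_m) : Prop := True.

(* A quotient group A/B (B a subgroup of A <= Z^m) is represented by the pair
   (A, B).  [quot_card A B k] : the quotient A/B is finite of order k,
   i.e. there are k elements of A forming a complete, irredundant system of
   representatives of the cosets of B in A. *)
Definition quot_card m (A B : 'cV[int]_m -> Prop) (k : nat) : Prop :=
  exists r : 'I_k -> 'cV[int]_m,
    (forall j, A (r j)) /\
    (forall x, A x -> exists! j, B (x - r j)).

(* A surjective group homomorphism A/B -> A'/B', given by a map f on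
   representatives that is well defined and additive modulo B'. *)
Definition quot_surj m m' (A B : 'cV[int]_m -> Prop)
  (A' B' : 'cV[int]_m' -> Prop) : Prop :=
  exists f : 'cV[int]_m -> 'cV[int]_m',
    (forall x, A x -> A' (f x)) /\
    (forall x y, A x -> A y -> B' (f (x + y) - f x - f y)) /\
    (forall x, B x -> B' (f x)) /\
    (forall y, A' y -> exists2 x, A x & B' (y - f x)).

Definition quot_surj_grp m (A B : 'cV[int]_m -> Prop) (G : finZmodType) : Prop :=
  exists g : 'cV[int]_m -> G,
    (forall x y, A x -> A y -> g (x + y) = g x + g y) /\
    (forall x, B x -> g x = 0) /\
    (forall z : G, exists2 x, A x & g x = z).

Definition SandI n (deg : 'I_n -> 'I_n -> nat) (i : 'I_n) :=
  (@allZ n.-1, colspan (reduced_laplacian deg i)).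
Definition SandT n (deg : 'I_n -> 'I_n -> nat) :=
  (@sum_zero n, colspan (laplacian deg)).

(* Deleting coordinate i identifies S_i with Z^n_0 / N_i, where N_i is spanned by the
   columns of L other than the i-th.  Since N_i lies in L Z^n this gives S_i ->> S; its
   kernel is cyclic, generated by the i-th column, of some order c_i, so |S_i| = c_i |S|.
   Every vector w in the kernel of L has w_i divisible by c_i for all i, and w can be
   chosen with w_0 = c_0; dividing it by gcd_i c_i contradicts the minimality of c_0
   unless that gcd is 1, which gives (2).  For (3), each surjection S_i ->> G kills c_i
   times the i-th column; weighting them by orthogonal idempotents e_i modulo |G| that
   lie in the ideals (c_i, |G|) and sum to 1, the sum of the e_i-multiples kills all of
   L Z^n and is still onto G.  The groups are finite because det L_i <> 0, by a maximum
   principle on the strongly connected graph. *)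

From HB Require Import structures.
From mathcomp Require Import all_boot all_order all_algebra.
From mathcomp Require Import all_fingroup finalg cyclic zify ring.
From Stdlib Require Import ClassicalEpsilon.
Set Implicit Arguments. Unset Strict Implicit. Unset Printing Implicit Defensive.
Import Order.TTheory GRing.Theory Num.Theory.
Local Open Scope ring_scope.

Definition asbool (P : Prop) : bool :=
  if excluded_middle_informative P then true else false.

Lemma asboolP (P : Prop) : reflect P (asbool P).
Proof. by rewrite /asbool; case: excluded_middle_informative => h; constructor. Qed.

(** * Subgroups of Z^m and their finite quotients *)

Definition zsubgroup m (P : 'cV[int]_m -> Prop) :=
  P 0 /\ (forall x y, P x -> P y -> P (x - y)).

Section ZSubgroup.
Variables (m : nat) (P : 'cV[int]_m -> Prop).
Hypothesis sP : zsubgroup P.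

Lemma zsubgroup0 : P 0.
Proof. by case: sP. Qed.

Lemma zsubgroupB x y : P x -> P y -> P (x - y).
Proof. by case: sP => _; apply. Qed.

Lemma zsubgroupN x : P x -> P (- x).
Proof. by move=> Px; rewrite -sub0r; apply: zsubgroupB => //; apply: zsubgroup0. Qed.

Lemma zsubgroupD x y : P x -> P y -> P (x + y).
Proof. by move=> Px Py; rewrite -[y]opprK; apply/zsubgroupB/zsubgroupN. Qed.

Lemma zsubgroupMn x k : P x -> P (x *+ k).
Proof.
move=> Px; elim: k => [|k IHk]; first by rewrite mulr0n; apply: zsubgroup0.
by rewrite mulrS; apply: zsubgroupD.
Qed.

Lemma zsubgroupZ (k : int) x : P x -> P (k *: x).
Proof.
move=> Px; rewrite -[k]intz scaler_int.
by case: k => k; rewrite ?NegzE ?mulrNz; [|apply: zsubgroupN]; apply: zsubgroupMn.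
Qed.

Lemma zsubgroup_sum (I : Type) (r : seq I) (Q : pred I) (F : I -> 'cV[int]_m) :
  (forall i, Q i -> P (F i)) -> P (\sum_(i <- r | Q i) F i).
Proof.
by move=> PF; elim/big_ind: _ => //; [apply: zsubgroup0 | apply: zsubgroupD].
Qed.

Lemma zsubgroup_sym x y : P (x - y) -> P (y - x).
Proof. by move=> Pxy; rewrite -opprB; apply: zsubgroupN. Qed.

Lemma zsubgroup_trans x y z : P (x - y) -> P (y - z) -> P (x - z).
Proof. by move=> Pxy Pyz; rewrite -[x](subrK y) -addrA; apply: zsubgroupD. Qed.

End ZSubgroup.

Lemma colspan_zsubgroup m k (M : 'M[int]_(m, k)) : zsubgroup (colspan M).
Proof.
split; first by exists 0; rewrite mulmx0.
by move=> _ _ [x ->] [y ->]; exists (x - y); rewrite mulmxBr.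
Qed.

Lemma sum_zero_zsubgroup m : zsubgroup (@sum_zero m).
Proof.
rewrite /sum_zero; split; first by rewrite big1 // => k _; rewrite mxE.
by move=> x y Sx Sy; under eq_bigr do rewrite !mxE; rewrite sumrB Sx Sy subrr.
Qed.

Section QuotCard.
Variable m : nat.
Implicit Types A B : 'cV[int]_m -> Prop.

Lemma quot_card_fintype A B (T : finType) (r : T -> 'cV[int]_m) :
  (forall t, A (r t)) -> (forall x, A x -> exists! t, B (x - r t)) ->
  quot_card A B #|T|.
Proof.
move=> Ar ru; exists (fun j => r (enum_val j)); split=> [j|x Ax]; first exact: Ar.
have [t [Bt tu]] := ru x Ax.
exists (enum_rank t); split; first by rewrite enum_rankK.
by move=> j Bj; rewrite (tu _ Bj) enum_valK.
Qed.

(* The least element (in enumeration order) of each class is its canonical representative. *)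
Lemma quot_card_of_cover A B (T : finType) (r : T -> 'cV[int]_m) :
  zsubgroup B -> (forall t, A (r t)) -> (forall x, A x -> exists t, B (x - r t)) ->
  exists k, quot_card A B k.
Proof.
move=> sB Ar rcover.
pose equiv t t' := asbool (B (r t - r t')).
pose C := [set t | [forall t', equiv t' t ==> (enum_rank t <= enum_rank t')%N]].
eexists; apply: (quot_card_fintype (r := fun t : {t | t \in C} => r (val t))) => [t|x Ax].
  exact: Ar.
have [t Bt] := rcover x Ax.
have equiv_tt : equiv t t by apply/asboolP; rewrite subrr; apply: zsubgroup0.
case: (arg_minnP (fun t' => enum_rank t' : nat) equiv_tt) => t0 /asboolP Bt0t min_t0.
have t0C : t0 \in C.
  rewrite inE; apply/forallP => t'; apply/implyP => /asboolP Bt't.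
  by apply: min_t0; apply/asboolP; apply: zsubgroup_trans (zsubgroup_sym sB Bt't).
have Bxt0 : B (x - r t0) by apply: zsubgroup_trans Bt Bt0t.
exists (exist _ t0 t0C); split=> // -[t1 t1C] /= Bxt1.
have Bt1t0 : B (r t1 - r t0) by apply: zsubgroup_trans (zsubgroup_sym sB Bxt1) Bxt0.
apply: val_inj => /=; apply: enum_rank_inj; apply/val_inj/eqP; rewrite /= eqn_leq.
move: t1C t0C; rewrite !inE => /forallP/(_ t0)/implyP-> /=; last first.
  by apply/asboolP; apply: zsubgroup_sym.
by move=> /forallP/(_ t1)/implyP->; last exact/asboolP.
Qed.

Lemma quot_cardM A N B s c :
  zsubgroup A -> zsubgroup N -> (forall x, N x -> A x) -> (forall x, B x -> N x) ->
  quot_card A N s -> quot_card N B c -> quot_card A B (s * c).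
Proof.
move=> sA sN NA BN [r1 [Ar1 r1u]] [r2 [Nr2 r2u]].
rewrite -[s]card_ord -[c]card_ord -card_prod.
apply: (quot_card_fintype (r := fun p : 'I_s * 'I_c => r1 p.1 + r2 p.2)).
  by move=> [j l] /=; apply: zsubgroupD => //; apply: NA.
move=> x Ax; have [j [Nj ju]] := r1u x Ax.
have [l [Bl lu]] := r2u _ Nj.
exists (j, l); split; first by rewrite /= opprD addrA.
move=> [j' l'] /=; rewrite opprD addrA => Bx.
have Nj' : N (x - r1 j').
  by rewrite -[x - r1 j'](subrK (r2 l')); apply: zsubgroupD => //; apply: BN.
by have ej := ju _ Nj'; subst j'; rewrite (lu _ Bx).
Qed.

Lemma quot_card_transfer m' A B (A' B' : 'cV[int]_m' -> Prop)
    (f : 'cV[int]_m -> 'cV[int]_m') k :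
  zsubgroup A -> {morph f : x y / x - y} ->
  (forall x, A x -> A' (f x)) -> (forall x, A x -> B x <-> B' (f x)) ->
  (forall y, A' y -> exists2 x, A x & f x = y) ->
  quot_card A B k -> quot_card A' B' k.
Proof.
move=> sA fB fA fB' fsurj [r [Ar ru]].
exists (fun j => f (r j)); split=> [j|y A'y]; first exact: fA.
have [x Ax <-] := fsurj y A'y; have [j [Bj ju]] := ru x Ax.
exists j; split; first by rewrite -fB; apply/fB'; [apply: zsubgroupB | ].
by move=> j' Bj'; apply: ju; apply/fB'; [apply: zsubgroupB | rewrite fB].
Qed.

End QuotCard.

(* The vectors with entries in [0, |det A|) cover Z^m / A Z^m,
   as (det A) Z^m = A (adj A) Z^m. *)
Lemma quot_card_det_neq0 m (A : 'M[int]_m) :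
  \det A != 0 -> exists k, quot_card (@allZ m) (colspan A) k.
Proof.
move=> detA0; pose D := `|\det A|%N.
apply: (quot_card_of_cover (T := {ffun 'I_m -> 'I_D}) (r := fun t => \col_a (t a : nat)%:Z)).
- exact: colspan_zsubgroup.
- by [].
move=> x _.
have lt_mod a : (`|(x a ord0 %% \det A)%Z|%N < D)%N.
  by rewrite -ltz_nat gez0_abs ?modz_ge0 // abszE ltz_mod.
exists [ffun a => Ordinal (lt_mod a)], (\adj A *m \col_a (x a ord0 %/ \det A)%Z).
rewrite mulmxA mul_mx_adj mul_scalar_mx; apply/matrixP => a b.
rewrite (ord1 b) !mxE ffunE /= gez0_abs ?modz_ge0 //.
by rewrite {1}(divz_eq (x a ord0) (\det A)) addrK mulrC.
Qed.

Lemma det_colsum_eq0 m (A : 'M[int]_m.+1) :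
  (forall j, \sum_i A i j = 0) -> \det A = 0.
Proof.
move=> colsum0; apply/eqP; rewrite -(intr_eq0 rat) -det_map_mx /=.
apply/det0P; exists (const_mx 1).
  by apply/eqP => /matrixP/(_ 0 0); rewrite !mxE; apply/eqP; rewrite oner_eq0.
apply/matrixP => a j; rewrite !mxE.
under eq_bigr do rewrite !mxE mul1r.
by rewrite -rmorph_sum /= colsum0.
Qed.

(** * The Laplacian *)

Section Laplacian.
Variables (n : nat) (deg : 'I_n -> 'I_n -> nat).
Local Notation L := (laplacian deg).

Lemma laplacianE r j : L r j = (r == j)%:R * (outdeg deg j)%:Z - (deg j r)%:Z.
Proof.
by rewrite mxE; case: eqP => [->|_]; rewrite ?mul1r // mul0r sub0r.
Qed.

Lemma outdegE j : (outdeg deg j)%:Z = \sum_k (deg j k)%:Z.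
Proof. by rewrite /outdeg (big_morph Posz PoszD (erefl (Posz 0))). Qed.

Lemma laplacian_colsum j : \sum_r L r j = 0.
Proof.
under eq_bigr do rewrite laplacianE.
rewrite sumrB (bigD1 j) //= eqxx mul1r big1 ?addr0 ?outdegE ?subrr //.
by move=> r /negbTE ->; rewrite mul0r.
Qed.

Lemma sum_zero_mul_laplacian x : sum_zero (L *m x).
Proof.
rewrite /sum_zero; under eq_bigr do rewrite mxE.
rewrite exchange_big /=; apply: big1 => b _.
by rewrite -mulr_suml laplacian_colsum mul0r.
Qed.

Lemma colspan_laplacian_sum_zero y : colspan L y -> sum_zero y.
Proof. by case=> x ->; apply: sum_zero_mul_laplacian. Qed.

Lemma row_mul_laplacian (R : comPzRingType) (y : 'I_n -> R) j :
  ((\row_k y k) *m map_mx intr L) 0 j = \sum_k (deg j k)%:R * (y j - y k).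
Proof.
rewrite mxE.
under eq_bigr do rewrite [map_mx _ _ _ _]mxE laplacianE mxE rmorphB rmorphM /= mulrBr.
rewrite sumrB (bigD1 j) //= eqxx mul1r big1 => [|r /negbTE->]; last by rewrite mul0r mulr0.
rewrite addr0 outdegE rmorph_sum mulr_sumr -sumrB; apply: eq_bigr => k _.
by rewrite mulrBr mulrC [y k * _]mulrC.
Qed.

(* The maximum spreads along every edge leaving a vertex where the function is harmonic,
   so by strong connectivity it reaches i. *)
Lemma harmonic_le_at (hsc : strongly_connected deg) (R : realDomainType)
    (i : 'I_n) (y : 'I_n -> R) :
  (forall j, j != i -> \sum_k (deg j k)%:R * (y j - y k) = 0) ->
  forall k, y k <= y i.
Proof.
move=> harm; case: (arg_maxP y (i0 := i) (P := predT) isT) => j0 _ ymax.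
suff <- : y j0 = y i by move=> k; apply: ymax.
have spread x z : x != i -> y x = y j0 -> (0 < deg x z)%N -> y z = y j0.
  move=> xi yx xz; have ge0 k : true -> 0 <= (deg x k)%:R * (y x - y k).
    by move=> _; rewrite mulr_ge0 // subr_ge0 yx; apply: ymax.
  move/eqP: (psumr_eq0P ge0 (harm x xi) (i := z) isT).
  by rewrite mulf_eq0 pnatr_eq0 eqn0Ngt xz /= subr_eq0 => /eqP <-.
have /connectP[p pth ilast] := hsc j0 i.
suff : forall x, y x = y j0 -> path [rel a b | (0 < deg a b)%N] x p ->
         y j0 = y i \/ y (last x p) = y j0.
  by case/(_ j0 erefl pth) => //; rewrite -ilast => ->.
elim: p {pth ilast} => [|z p IHp] x yx /=; first by right.
case/andP=> xz pz; have [xi|xi] := eqVneq x i; first by left; rewrite -yx xi.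
exact: IHp (spread x z xi yx xz) pz.
Qed.

End Laplacian.

Lemma det_reduced_laplacian_neq0 n (deg : 'I_n.+1 -> 'I_n.+1 -> nat)
    (hsc : strongly_connected deg) (i : 'I_n.+1) :
  \det (reduced_laplacian deg i) != 0.
Proof.
apply/negP => /eqP detLi0.
have /det0P[v v_neq0 vLi] : \det (map_mx (intr : int -> rat) (reduced_laplacian deg i)) == 0.
  by rewrite det_map_mx detLi0 rmorph0.
pose y k : rat := oapp (v 0) 0 (unlift i k).
have yi : y i = 0 by rewrite /y unlift_none.
have yl a : y (lift i a) = v 0 a by rewrite /y liftK.
have harm j : j != i -> \sum_k (deg j k)%:R * (y j - y k) = 0.
  case: (unliftP i j) => [b ->|->]; last by rewrite eqxx.
  move=> _; rewrite -row_mul_laplacian mxE (bigD1_ord i) //= !mxE yi mul0r add0r.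
  move/matrixP/(_ 0 b): vLi; rewrite [LHS]mxE [RHS]mxE; apply: etrans.
  by apply: eq_bigr => a _; rewrite !mxE yl.
have harmN j : j != i -> \sum_k (deg j k)%:R * (- y j - - y k) = 0.
  move=> ji; rewrite -[RHS]oppr0 -[in RHS](harm j ji) -sumrN.
  by apply: eq_bigr => k _; rewrite -mulrN opprD.
have y_le := harmonic_le_at hsc harm; have y_ge := harmonic_le_at hsc harmN.
apply/negP: v_neq0; apply/negPn/eqP/matrixP => a b; rewrite ord1 mxE -yl.
have := y_ge (lift i b); rewrite yi oppr0 oppr_le0 => ge0.
by apply/eqP; rewrite eq_le ge0 -yi y_le.
Qed.

Section CoordinateDeletion.
Variables (n : nat) (i : 'I_n.+1).

Definition delv (y : 'cV[int]_n.+1) : 'cV[int]_n := \col_a y (lift i a) 0.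

Definition insv (z : 'cV[int]_n) : 'cV[int]_n.+1 :=
  \col_k oapp (z^~ 0) (- \sum_a z a 0) (unlift i k).

Definition insv0 (z : 'cV[int]_n) : 'cV[int]_n.+1 :=
  \col_k oapp (z^~ 0) 0 (unlift i k).

Lemma delvD : {morph delv : x y / x + y}.
Proof. by move=> x y; apply/matrixP => a b; rewrite !mxE. Qed.

Lemma delvB : {morph delv : x y / x - y}.
Proof. by move=> x y; apply/matrixP => a b; rewrite !mxE. Qed.

Lemma insvB : {morph insv : x y / x - y}.
Proof.
move=> x y; apply/matrixP => k b; rewrite !mxE; case: unlift => [a|] /=; rewrite ?mxE //.
by rewrite -opprD -sumrB; congr (- _); apply: eq_bigr => a _; rewrite !mxE.
Qed.

Lemma insvD : {morph insv : x y / x + y}.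
Proof.
move=> x y; apply/matrixP => k b; rewrite !mxE; case: unlift => [a|] /=; rewrite ?mxE //.
by rewrite -opprD -big_split; congr (- _); apply: eq_bigr => a _; rewrite !mxE.
Qed.

Lemma insvK : cancel insv delv.
Proof. by move=> z; apply/matrixP => a b; rewrite !mxE liftK ord1. Qed.

Lemma insv0K : cancel insv0 delv.
Proof. by move=> z; apply/matrixP => a b; rewrite !mxE liftK ord1. Qed.

Lemma insv0_at z : insv0 z i 0 = 0.
Proof. by rewrite mxE unlift_none. Qed.

Lemma sum_zero_insv z : sum_zero (insv z).
Proof.
rewrite /sum_zero (bigD1_ord i) //= !mxE unlift_none addrC; apply/eqP; rewrite subr_eq0.
by apply/eqP; apply: eq_bigr => a _; rewrite mxE liftK.
Qed.

Lemma delvK y : sum_zero y -> insv (delv y) = y.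
Proof.
rewrite /sum_zero (bigD1_ord i) //= => y_sum0.
apply/matrixP => k b; rewrite !ord1 mxE; case: unliftP => [a ->|->] /=; first by rewrite mxE.
move/eqP: y_sum0; rewrite addr_eq0 => /eqP ->; congr (- _).
by apply: eq_bigr => a _; rewrite mxE.
Qed.

End CoordinateDeletion.

Section VertexSandpile.
Variables (n : nat) (deg : 'I_n.+1 -> 'I_n.+1 -> nat).
Local Notation L := (laplacian deg).

Definition colspan_off (i : 'I_n.+1) (y : 'cV[int]_n.+1) : Prop :=
  exists2 x : 'cV[int]_n.+1, x i 0 = 0 & y = L *m x.

Definition lapcol (i : 'I_n.+1) : 'cV[int]_n.+1 := L *m delta_mx i 0.

Lemma colspan_off_zsubgroup i : zsubgroup (colspan_off i).
Proof.
split; first by exists 0; rewrite ?mxE ?mulmx0.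
by move=> _ _ [x x_i ->] [y y_i ->]; exists (x - y); rewrite ?mxE ?x_i ?y_i ?subrr ?mulmxBr.
Qed.

Lemma colspan_off_colspan i y : colspan_off i y -> colspan L y.
Proof. by case=> x _ ->; exists x. Qed.

Lemma colspan_off_mul_laplacianB i x : colspan_off i (L *m x - x i 0 *: lapcol i).
Proof.
exists (x - x i 0 *: delta_mx i 0); first by rewrite !mxE !eqxx mulr1 subrr.
by rewrite mulmxBr scalemxAr.
Qed.

Lemma delv_mul_laplacian i x :
  delv i (L *m x) = reduced_laplacian deg i *m delv i x + x i 0 *: delv i (lapcol i).
Proof.
apply/matrixP => a b; rewrite !ord1 !mxE (bigD1_ord i) // [RHS]addrC.
congr (_ + _); last by apply: eq_bigr => c _; rewrite !mxE.
rewrite (bigD1_ord i) //= !mxE eqxx mulr1 big1 ?addr0 1?mulrC // => c _.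
by rewrite [delta_mx _ _ _ _]mxE eq_sym (negbTE (neq_lift _ _)) mulr0.
Qed.

Lemma colspan_off_delv i y :
  colspan_off i y -> colspan (reduced_laplacian deg i) (delv i y).
Proof. by case=> x x_i ->; exists (delv i x); rewrite delv_mul_laplacian x_i scale0r addr0. Qed.

Lemma colspan_reduced_insv i z :
  colspan (reduced_laplacian deg i) z -> colspan_off i (insv i z).
Proof.
case=> u ->; exists (insv0 i u); first exact: insv0_at.
rewrite -[RHS](delvK i (sum_zero_mul_laplacian _ _)) delv_mul_laplacian insv0_at.
by rewrite scale0r addr0 insv0K.
Qed.

Lemma sandpile_vertex_surj i :
  quot_surj (SandI deg i).1 (SandI deg i).2 (SandT deg).1 (SandT deg).2.
Proof.
have L0 : colspan L 0 by exists 0; rewrite mulmx0.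
exists (insv i); split=> [x _|]; first exact: sum_zero_insv.
split=> [x y _ _|]; first by rewrite insvD (addrC (insv i x)) addrK subrr.
split=> [x /colspan_reduced_insv/colspan_off_colspan //|y y_sum0].
by exists (delv i y) => //; rewrite delvK // subrr.
Qed.

Lemma quot_card_reduced_off i d :
  quot_card (@allZ n) (colspan (reduced_laplacian deg i)) d <->
  quot_card (@sum_zero n.+1) (colspan_off i) d.
Proof.
split; [apply: (quot_card_transfer (f := insv i)) | apply: (quot_card_transfer (f := delv i))].
- by [].
- exact: insvB.
- by move=> x _; apply: sum_zero_insv.
- move=> x _; split; first exact: colspan_reduced_insv.
  by move=> /colspan_off_delv; rewrite insvK.
- by move=> y y_sum0; exists (delv i y); rewrite ?delvK.
- exact: sum_zero_zsubgroup.
- exact: delvB.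
- by [].
- move=> y y_sum0; split; first exact: colspan_off_delv.
  by move=> /colspan_reduced_insv; rewrite delvK.
- by move=> x _; exists (insv i x); [apply: sum_zero_insv | rewrite insvK].
Qed.

Hypothesis hsc : strongly_connected deg.

Lemma sandpile_total_finite : exists s, quot_card (@sum_zero n.+1) (colspan L) s.
Proof.
have [d /quot_card_reduced_off[r [r_sum0 r_cover]]] :=
  quot_card_det_neq0 (det_reduced_laplacian_neq0 hsc ord0).
apply: (quot_card_of_cover (r := r)) => //; first exact: colspan_zsubgroup.
by move=> x /r_cover[j [x_off _]]; exists j; apply: colspan_off_colspan x_off.
Qed.

End VertexSandpile.

(** * The order of a column of the Laplacian modulo the others *)

Lemma int_ideal_generator (P : int -> Prop) :
  (forall s t, P s -> P t -> P (s - t)) -> (forall k t, P t -> P (k * t)) ->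
  (exists t : nat, (0 < t)%N /\ P t%:Z) ->
  exists c : nat, [/\ (0 < c)%N, P c%:Z & forall t, P t -> (c%:Z %| t)%Z].
Proof.
move=> PB PM Ppos.
have ex_c : exists t : nat, (0 < t)%N && asbool (P t%:Z).
  by have [t [t_gt0 Pt]] := Ppos; exists t; rewrite t_gt0; apply/asboolP.
case: (ex_minnP ex_c) => c /andP[c_gt0 /asboolP Pc] c_min; exists c; split=> // t Pt.
have c_neq0 : c%:Z != 0 by rewrite eqz_nat -lt0n.
have Pmod : P (t %% c%:Z)%Z.
  have -> : (t %% c%:Z)%Z = t - (t %/ c%:Z)%Z * c%:Z.
    by apply/eqP; rewrite eq_sym subr_eq addrC -divz_eq.
  by apply: PB => //; apply: PM.
have mod_ge0 := modz_ge0 t c_neq0.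
apply/dvdz_mod0P/eqP; apply: contraTT (ltz_mod t c_neq0); rewrite -leNgt -absz_eq0 => mod_neq0.
rewrite -[X in _ <= X]gez0_abs // lez_nat; apply: c_min.
by rewrite lt0n mod_neq0; apply/asboolP; rewrite gez0_abs.
Qed.

Section ColumnOrder.
Variables (n : nat) (deg : 'I_n.+1 -> 'I_n.+1 -> nat).
Local Notation L := (laplacian deg).

Definition col_relation i (t : int) : Prop := colspan_off deg i (t *: lapcol deg i).

(* c_i: the index of N_i in L Z^n, i.e. the order of the kernel of S_i ->> S. *)
Definition col_order_spec i (c : nat) : Prop :=
  [/\ (0 < c)%N, col_relation i c%:Z & forall t, col_relation i t -> (c%:Z %| t)%Z].

Lemma col_relationB i s t : col_relation i s -> col_relation i t -> col_relation i (s - t).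
Proof. by rewrite /col_relation scalerBl; apply: zsubgroupB; apply: colspan_off_zsubgroup. Qed.

Lemma col_relationM i k t : col_relation i t -> col_relation i (k * t).
Proof. by rewrite /col_relation -scalerA; apply: zsubgroupZ; apply: colspan_off_zsubgroup. Qed.

Lemma col_relation_ker (w : 'cV[int]_n.+1) j : L *m w = 0 -> col_relation j (w j 0).
Proof.
move=> Lw0; exists (w j 0 *: delta_mx j 0 - w); first by rewrite !mxE !eqxx mulr1 subrr.
by rewrite mulmxBr Lw0 subr0 -scalemxAr.
Qed.

(* A kernel vector of L is given by a column of adj L, whose i-th entry is det L_i. *)
Lemma col_relation_det i : col_relation i (\det (reduced_laplacian deg i)).
Proof.
have L_sing : \det L = 0 by apply: det_colsum_eq0; apply: laplacian_colsum.
have Lw0 : L *m (\adj L *m (delta_mx i 0 : 'cV_n.+1)) = 0.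
  by rewrite mulmxA mul_mx_adj L_sing mul_scalar_mx !scale0r.
suff <- : (\adj L *m (delta_mx i 0 : 'cV_n.+1)) i 0 = \det (reduced_laplacian deg i).
  exact: col_relation_ker.
rewrite -colE !mxE /cofactor -signr_odd addnn odd_double expr0 mul1r.
by congr (\det _); apply/matrixP => a b; rewrite !mxE.
Qed.

Lemma col_order_exists (hsc : strongly_connected deg) :
  exists c, forall i, col_order_spec i (c i).
Proof.
apply: fin_all_exists => i; apply: int_ideal_generator.
- exact: col_relationB.
- exact: col_relationM.
exists `|\det (reduced_laplacian deg i)|%N.
rewrite absz_gt0 det_reduced_laplacian_neq0 // abszEsg; split=> //.
exact/col_relationM/col_relation_det.
Qed.

Lemma colspan_off_mul_laplacian_colE i c (x : 'cV[int]_n.+1) t :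
  col_order_spec i c ->
  colspan_off deg i (L *m x - t *: lapcol deg i) <-> (x i ord0 == t %[mod c%:Z])%Z.
Proof.
case=> _ c_rel c_dvd; have sN := colspan_off_zsubgroup deg i.
have -> : L *m x - t *: lapcol deg i =
    (L *m x - x i 0 *: lapcol deg i) + (x i 0 - t) *: lapcol deg i.
  by rewrite scalerBl addrA subrK.
rewrite eqz_mod_dvd; split=> [off|/dvdzP[q ->]].
  apply: c_dvd; have := zsubgroupB sN off (colspan_off_mul_laplacianB deg i x).
  by rewrite addrAC subrr add0r.
apply: zsubgroupD => //; first exact: colspan_off_mul_laplacianB.
exact: col_relationM.
Qed.

Lemma quot_card_colspan_off i c :
  col_order_spec i c -> quot_card (colspan L) (colspan_off deg i) c.
Proof.
move=> c_spec; have [c_gt0 _ _] := c_spec.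
have c_neq0 : c%:Z != 0 by rewrite eqz_nat -lt0n.
rewrite -[c in quot_card _ _ c]card_ord.
apply: (quot_card_fintype (r := fun t : 'I_c => (t : nat)%:Z *: lapcol deg i)).
  by move=> t; exists ((t : nat)%:Z *: delta_mx i 0); rewrite /lapcol scalemxAr.
move=> _ [x ->]; set m := (x i ord0 %% c%:Z)%Z.
have m_ge0 : 0 <= m := modz_ge0 _ c_neq0.
have m_lt : (`|m| < c)%N by have := ltz_mod (x i ord0) c_neq0; rewrite -ltz_nat gez0_abs.
exists (Ordinal m_lt); split=> [|j].
  by apply/(colspan_off_mul_laplacian_colE _ _ c_spec) => /=; rewrite gez0_abs // modz_mod.
move/(colspan_off_mul_laplacian_colE _ _ c_spec)/eqP.
rewrite [in RHS]modz_small ?ltz_nat ?ltn_ord // => m_eq; apply: val_inj => /=.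
by rewrite /m m_eq absz_nat.
Qed.

Lemma biggcd_col_order c :
  (forall i, col_order_spec i (c i)) -> \big[gcdn/0%N]_i c i = 1%N.
Proof.
move=> c_spec; set g := \big[gcdn/0%N]_i c i.
have [c0_gt0 [u u0 Lu] c0_dvd] := c_spec ord0.
pose w := (c ord0)%:Z *: delta_mx ord0 0 - u.
have Lw0 : L *m w = 0 by rewrite mulmxBr -scalemxAr -Lu subrr.
have g_dvd j : (g %| c j)%N by apply: (elimT (dvdn_biggcdP _ _ _) (dvdnn g)).
have g_gt0 : (0 < g)%N := dvdn_gt0 c0_gt0 (g_dvd ord0).
have g_dvd_w j : (g%:Z %| w j ord0)%Z.
  have [_ _ cj_dvd] := c_spec j.
  by apply: (@dvdz_trans (c j)%:Z); [exact: g_dvd | exact: cj_dvd (col_relation_ker j Lw0)].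
pose w' := \col_k (w k ord0 %/ g%:Z)%Z.
have w_eq : w = g%:Z *: w'.
  by apply/matrixP => a b; rewrite (ord1 b) [RHS]mxE /w' [in RHS]mxE mulrC divzK.
have Lw'0 : L *m w' = 0.
  by move/eqP: Lw0; rewrite w_eq -scalemxAr scalemx_eq0 => /orP[/eqP g0|/eqP //]; lia.
have /dvdnP[k c0_eq] : (c ord0 %| c ord0 %/ g)%N.
  have := c0_dvd _ (col_relation_ker ord0 Lw'0).
  by rewrite !mxE !eqxx mulr1 u0 subr0 divz_nat.
have := divnK (g_dvd ord0); rewrite c0_eq mulnAC => /eqP.
by rewrite -{2}[c ord0]mul1n eqn_pmul2r // muln_eq1 => /andP[_ /eqP].
Qed.

End ColumnOrder.

Theorem sandpile_card_gcd n (deg : 'I_n.+1 -> 'I_n.+1 -> nat) (hsc : strongly_connected deg) :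
  exists ks : 'I_n.+1 -> nat,
     (forall i, quot_card (SandI deg i).1 (SandI deg i).2 (ks i)) /\
     quot_card (SandT deg).1 (SandT deg).2 (\big[gcdn/0%N]_(i < n.+1) ks i).
Proof.
have [c c_spec] := col_order_exists hsc; have [s s_card] := sandpile_total_finite hsc.
exists (fun i => s * c i)%N; split=> [i|] /=; last first.
  suff -> : \big[gcdn/0%N]_i (s * c i)%N = (s * \big[gcdn/0%N]_i c i)%N.
    by rewrite (biggcd_col_order c_spec) muln1.
  by elim/big_rec2: _ => [|i a b _ ->]; rewrite ?muln0 ?muln_gcdr.
apply/quot_card_reduced_off.
apply: (quot_cardM (sum_zero_zsubgroup _) (colspan_zsubgroup _) _ _ s_card).
- exact: colspan_laplacian_sum_zero.
- exact: colspan_off_colspan.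
- exact: quot_card_colspan_off.
Qed.

(** * Orthogonal idempotents modulo an integer *)

Definition orthogonal_idempotents_mod (M : int) (K : nat) (e : nat -> int) : Prop :=
  [/\ forall i j, (i < K)%N -> (j < K)%N -> i != j -> (M %| e i * e j)%Z,
      forall i, (i < K)%N -> (M %| e i * e i - e i)%Z &
      (M %| \sum_(i < K) e i - 1)%Z].

(* Given al u + be w = 1, the idempotent al u splits Z/uw as Z/u x Z/w; lift the system
   modulo u through the complementary idempotent be w and add al u as a new member. *)
Lemma orthogonal_idempotents_glue (u w al be : int) K (e : nat -> int) :
  al * u + be * w = 1 -> orthogonal_idempotents_mod u K e ->
  orthogonal_idempotents_mod (u * w) K.+1
    (fun i => if i == K then al * u else be * w * e i).
Proof.
move=> bez [orth idem sum1].
have multiple (q X : int) : X = q * (u * w) -> (u * w %| X)%Z.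
  by move=> ->; apply: dvdz_mull; apply: dvdzz.
have w_dvd_F2 : (w %| be * be * w * w)%Z by apply: dvdz_mull; apply: dvdzz.
split=> [i j|i|].
- rewrite !ltnS (leq_eqVlt i) (leq_eqVlt j).
  case/predU1P=> [->|ltiK] /predU1P[->|ltjK]; rewrite ?eqxx //.
  + by rewrite (ltn_eqF ltjK) => _; apply: (multiple (al * be * e j)); ring.
  + by rewrite (ltn_eqF ltiK) => _; apply: (multiple (al * be * e i)); ring.
  rewrite (ltn_eqF ltiK) (ltn_eqF ltjK) => ij.
  have -> : be * w * e i * (be * w * e j) = e i * e j * (be * be * w * w) by ring.
  exact: dvdz_mul (orth _ _ ltiK ltjK ij) w_dvd_F2.
- rewrite ltnS leq_eqVlt => /predU1P[->|ltiK]; rewrite ?eqxx.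
    apply: (multiple (- (al * be))).
    have -> : al * u * (al * u) - al * u =
        - (al * be) * (u * w) + al * u * (al * u + be * w - 1) by ring.
    by rewrite bez subrr mulr0 addr0.
  rewrite (ltn_eqF ltiK).
  have -> : be * w * e i * (be * w * e i) - be * w * e i =
      (e i * e i - e i) * (be * be * w * w) - al * be * e i * (u * w)
      + be * w * e i * (al * u + be * w - 1) by ring.
  rewrite bez subrr mulr0 addr0; apply: rpredB; last exact: multiple.
  exact: dvdz_mul (idem _ ltiK) w_dvd_F2.
rewrite big_ord_recr /= eqxx.
under eq_bigr => i _ do rewrite (ltn_eqF (ltn_ord i)).
have -> : \sum_(i < K) be * w * e i + al * u - 1 =
    (\sum_(i < K) e i - 1) * (be * w) + (al * u + be * w - 1) by rewrite -mulr_sumr; ring.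
rewrite bez subrr addr0; apply: dvdz_mul sum1 _.
by apply: dvdz_mull; apply: dvdzz.
Qed.

(* M = u w with u the \pi(c)-part of M: u absorbs gcd(c, M) and is coprime to g. *)
Lemma coprime_part_split (c g M : nat) :
  (0 < c)%N -> (0 < M)%N -> coprime M (gcdn g c) ->
  exists u w : nat, [/\ (u * w)%N = M, coprime u w, (gcdn c M %| u)%N & coprime u g].
Proof.
move=> c_gt0 M_gt0 cop; pose pi := \pi(c).
exists (M`_pi)%N, (M`_pi^')%N; split; [exact: partnC | exact: coprime_partC | |].
  have pi_gcd : pi.-nat (gcdn c M) := pnat_dvd (dvdn_gcdl c M) (pnat_pi c_gt0).
  by rewrite -(part_pnat_id pi_gcd); apply: partn_dvd M_gt0 (dvdn_gcdr _ _).
set d := gcdn (M`_pi)%N g.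
have d_dvd_M : (d %| M)%N := dvdn_trans (dvdn_gcdl _ _) (dvdn_part pi M).
have pi_d : pi.-nat d := pnat_dvd (dvdn_gcdl _ g) (part_pnat pi M).
have d_gt0 : (0 < d)%N by rewrite gcdn_gt0 part_gt0.
have cop_cd : coprime c d.
  rewrite /coprime -dvdn1 -(eqP cop) !dvdn_gcd dvdn_gcdl (dvdn_trans (dvdn_gcdr _ _) d_dvd_M).
  by rewrite (dvdn_trans (dvdn_gcdr _ _) (dvdn_gcdr _ g)).
by apply/eqP/(pnat_1 pi_d); rewrite -coprime_pi'.
Qed.

Lemma orthogonal_idempotents_mod_exists K (cs : nat -> nat) (M : nat) :
  (0 < M)%N -> (forall i, (i < K)%N -> (0 < cs i)%N) ->
  coprime M (\big[gcdn/0%N]_(i < K) cs i) ->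
  exists e, orthogonal_idempotents_mod M%:Z K e /\
    forall i, (i < K)%N -> exists a b : int, e i = a * (cs i)%:Z + b * M%:Z.
Proof.
elim: K M => [|K IHK] M M_gt0 cs_gt0.
  rewrite big_ord0 /coprime gcdn0 => /eqP ->.
  by exists (fun _ => 0); split=> //; split=> //; rewrite dvd1z.
rewrite big_ord_recr /= => cop.
have [u [w [uwM cop_uw gcd_dvd_u cop_ug]]] := coprime_part_split (cs_gt0 K (ltnSn K)) M_gt0 cop.
have u_gt0 : (0 < u)%N by move: M_gt0; rewrite -uwM muln_gt0 => /andP[].
have [e' [e'_idem e'_ideal]] := IHK u u_gt0 (fun i lt => cs_gt0 i (ltnW lt)) cop_ug.
have [al [be bez]] : exists al be, al * u%:Z + be * w%:Z = 1.
  by have [al [be bez]] := Bezoutz u w; exists al, be; rewrite bez /gcdz /= (eqP cop_uw).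
exists (fun i => if i == K then al * u%:Z else be * w%:Z * e' i).
split=> [|i]; first by rewrite -uwM PoszM; apply: orthogonal_idempotents_glue.
rewrite ltnS leq_eqVlt => /predU1P[->|ltiK]; rewrite ?eqxx.
  have [x [y bez_cM]] := Bezoutz (cs K) M; have /dvdnP[q ->] := gcd_dvd_u.
  exists (al * q%:Z * x), (al * q%:Z * y).
  by rewrite PoszM -[(gcdn _ _)%:Z]/(gcdz (cs K) M) -bez_cM; ring.
rewrite (ltn_eqF ltiK); have [a [b ->]] := e'_ideal i ltiK.
by exists (be * w%:Z * a), (be * b); rewrite -uwM PoszM; ring.
Qed.

(** * Surjections onto a finite abelian group *)

Lemma mulrz_card_dvd (G : finZmodType) (z : G) (t : int) :
  (#|G|%:Z %| t)%Z -> z *~ t = 0.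
Proof.
case/dvdzP => q ->; rewrite mulrzA -[z *~ q *~ _]/((z *~ q) *+ #|G|).
by rewrite -FinRing.zmodXgE -cardsT expg_cardG ?inE.
Qed.

Lemma additive_scalez m (V : zmodType) (f : 'cV[int]_m -> V) :
  {morph f : x y / x + y} -> forall (k : int) x, f (k *: x) = f x *~ k.
Proof.
move=> fD; have f0 : f 0 = 0 by apply: (addrI (f 0)); rewrite -fD !addr0.
have fN x : f (- x) = - f x by apply: (addrI (f x)); rewrite -fD !subrr f0.
have fMn (k : nat) x : f (k%:Z *: x) = f x *+ k.
  elim: k => [|k IHk]; first by rewrite scale0r f0.
  by rewrite -[k.+1]addn1 PoszD scalerDl scale1r fD IHk mulrnDr.
by case=> k x; rewrite ?NegzE ?scaleNr ?fN fMn // mulrNz.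
Qed.

Section GluedSurjection.
Variables (n : nat) (deg : 'I_n.+1 -> 'I_n.+1 -> nat) (G : finZmodType).
Variables (c : 'I_n.+1 -> nat) (h : 'I_n.+1 -> 'cV[int]_n.+1 -> G) (e : nat -> int).
Hypothesis c_rel : forall i, col_relation deg i (c i)%:Z.
Hypothesis hD : forall i, {morph h i : x y / x + y}.
Hypothesis h_off : forall i y, colspan_off deg i y -> h i y = 0.
Hypothesis h_surj : forall i z, exists2 x, sum_zero x & h i x = z.
Hypothesis e_idem : orthogonal_idempotents_mod #|G|%:Z n.+1 e.
Hypothesis e_ideal : forall i : 'I_n.+1, exists a b : int, e i = a * (c i)%:Z + b * #|G|%:Z.

Definition glued_hom (y : 'cV[int]_n.+1) : G := \sum_(i < n.+1) h i y *~ e i.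

Lemma glued_homD : {morph glued_hom : x y / x + y}.
Proof. by move=> x y; rewrite -big_split; apply: eq_bigr => i _; rewrite hD mulrzDl. Qed.

Lemma glued_hom_lapcol i : h i (lapcol deg i) *~ e i = 0.
Proof.
have [a [b ->]] := e_ideal i; rewrite mulrzDr -additive_scalez // h_off ?add0r.
  by apply: mulrz_card_dvd; apply: dvdz_mull; apply: dvdzz.
exact: col_relationM.
Qed.

Lemma glued_hom_laplacian x : glued_hom (laplacian deg *m x) = 0.
Proof.
apply: big1 => i _; rewrite -[laplacian deg *m x](subrK (x i 0 *: lapcol deg i)).
rewrite hD h_off; last exact: colspan_off_mul_laplacianB.
by rewrite add0r additive_scalez // mulrzAC glued_hom_lapcol mul0rz.
Qed.

Lemma glued_hom_surj z : exists2 x, sum_zero x & glued_hom x = z.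
Proof.
have [orth idem sum1] := e_idem.
have /fin_all_exists[xs xs_spec] : forall j, exists x, sum_zero x /\ h j x = z.
  by move=> j; have [x x_sum0 hx] := h_surj j z; exists x.
exists (\sum_(j < n.+1) e j *: xs j).
  apply: (zsubgroup_sum (sum_zero_zsubgroup n.+1)) => j _.
  by apply: (zsubgroupZ (sum_zero_zsubgroup _)); case: (xs_spec j).
have hsum i : h i (\sum_(j < n.+1) e j *: xs j) = \sum_j h i (xs j) *~ e j.
  have h0 : h i 0 = 0 by rewrite -(scale0r 0) additive_scalez ?mulr0z.
  rewrite (big_morph (h i) (hD i) h0).
  by apply: eq_bigr => j _; rewrite additive_scalez.
rewrite /glued_hom.
under eq_bigr => i _ do rewrite hsum mulrz_suml (bigD1 i) //= (proj2 (xs_spec i)).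
rewrite (eq_bigr (fun i : 'I_n.+1 => z *~ e i)) => [|i _].
  apply/eqP; rewrite -mulrz_sumr -subr_eq0 -[X in _ - X]mulr1z -mulrzBr; apply/eqP.
  exact: mulrz_card_dvd.
rewrite big1 => [|j ji]; last by rewrite -mulrzA mulrz_card_dvd // orth.
rewrite addr0 -mulrzA; apply/eqP; rewrite -subr_eq0 -mulrzBr; apply/eqP.
exact: mulrz_card_dvd (idem _ (ltn_ord i)).
Qed.

End GluedSurjection.

Lemma hom_delv_properties n (deg : 'I_n.+1 -> 'I_n.+1 -> nat) i (G : finZmodType)
    (g : 'cV[int]_n -> G) :
  (forall x y, allZ x -> allZ y -> g (x + y) = g x + g y) ->
  (forall x, colspan (reduced_laplacian deg i) x -> g x = 0) ->
  (forall z, exists2 x, allZ x & g x = z) ->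
  [/\ {morph g \o delv i : x y / x + y},
      forall y, colspan_off deg i y -> g (delv i y) = 0 &
      forall z, exists2 x, sum_zero x & g (delv i x) = z].
Proof.
move=> gD g_red g_surj; split=> [x y|y /colspan_off_delv/g_red //|z] /=.
  by rewrite delvD; apply: gD.
have [x _ <-] := g_surj z; exists (insv i x); first exact: sum_zero_insv.
by rewrite insvK.
Qed.

Theorem sandpile_total_surj_grp n (deg : 'I_n.+1 -> 'I_n.+1 -> nat)
    (hsc : strongly_connected deg) (G : finZmodType) :
  (forall i, quot_surj_grp (SandI deg i).1 (SandI deg i).2 G) ->
  quot_surj_grp (SandT deg).1 (SandT deg).2 G.
Proof.
move=> /fin_all_exists[g g_spec] /=; have [c c_spec] := col_order_exists hsc.
have G_gt0 : (0 < #|G|)%N by apply/card_gt0P; exists 0.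
have cop : coprime #|G| (\big[gcdn/0%N]_(k < n.+1) c (inord k)).
  by rewrite (eq_bigr c) ?(biggcd_col_order c_spec) ?coprimen1 // => i _; rewrite inord_val.
have c_gt0 k : (k < n.+1)%N -> (0 < c (inord k))%N by case: (c_spec (inord k)).
have [e [e_idem e_ideal]] := orthogonal_idempotents_mod_exists G_gt0 c_gt0 cop.
have c_rel i : col_relation deg i (c i)%:Z by case: (c_spec i).
have e_ideal' (i : 'I_n.+1) : exists a b : int, e i = a * (c i)%:Z + b * #|G|%:Z.
  by have [a [b ->]] := e_ideal i (ltn_ord i); exists a, b; rewrite inord_val.
pose h i := g i \o delv i.
have /all_and3[hD h_off h_surj] : forall i, [/\ {morph h i : x y / x + y},
    forall y, colspan_off deg i y -> h i y = 0 & forall z, exists2 x, sum_zero x & h i x = z].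
  by move=> i; case: (g_spec i) => gD [g_red g_surj]; apply: hom_delv_properties.
exists (glued_hom h e); split; [|split].
- by move=> x y _ _; apply: glued_homD.
- by move=> _ [x ->]; apply: (glued_hom_laplacian (h := h) c_rel).
- exact: (glued_hom_surj (h := h)).
Qed.

Theorem mainTheorem6 (n : nat) (deg : 'I_n -> 'I_n -> nat)
  (hn : (0 < n)%N) (hsc : strongly_connected deg) :
  (forall i : 'I_n,
     quot_surj (SandI deg i).1 (SandI deg i).2 (SandT deg).1 (SandT deg).2) /\
  (exists ks : 'I_n -> nat,
     (forall i, quot_card (SandI deg i).1 (SandI deg i).2 (ks i)) /\
     quot_card (SandT deg).1 (SandT deg).2 (\big[gcdn/0%N]_(i < n) ks i)) /\
  (forall G : finZmodType,
     (forall i : 'I_n, quot_surj_grp (SandI deg i).1 (SandI deg i).2 G) ->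
     quot_surj_grp (SandT deg).1 (SandT deg).2 G).
Proof.
case: n deg hn hsc => // n deg _ hsc.
split; first exact: sandpile_vertex_surj.
split; first exact: sandpile_card_gcd.
by move=> G; apply: sandpile_total_surj_grp.
Qed.
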